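(* Let $\mathcal{X}\subset\mathbb{R}^d$ be bounded and $\mathcal{Y}\subset\mathbb{R}$. Let $p_{\mathcal{D}}$ (the data source distribution) and $p_{\mathcal{L}}$ (the training data distribution) be probability densities on $\mathcal{X}\times\mathcal{Y}$ with marginals $p_{\mathcal{X}_{\mathcal{D}}}(\mathbf{x})=\int_{\mathcal{Y}}p_{\mathcal{D}}(\mathbf{x},y)\,dy$ and $p_{\mathcal{X}_{\mathcal{L}}}(\mathbf{x})=\int_{\mathcal{Y}}p_{\mathcal{L}}(\mathbf{x},y)\,dy$, and with common conditional density $p(y\mid\mathbf{x}):=p_{\mathcal{D}}(y\mid\mathbf{x})=p_{\mathcal{L}}(y\mid\mathbf{x})$. Let $\mathcal{L}=\{(\mathbf{x}_j,y_j)\}_{j=1}^b$ be a labeled set with locations $\mathcal{L}_{\mathcal{X}}=\{\mathbf{x}_j\}_{j=1}^b$ sampled from $p_{\mathcal{L}}$, let $m_{\mathcal{L}}\in\mathcal{M}$ be a regression model trained on $\mathcal{L}$, and let $l:\mathcal{X}\times\mathcal{Y}\times\mathcal{M}\to\mathbb{R}^+$ be an error function. Write $\mathbb{E}[\,\cdot\mid\mathbf{x}]$ for expectation of $Y$ with respect to $p(y\mid\mathbf{x})$. Assume: (A1) For every $\mathbf{x}_q\in\mathcal{X}$, $\mathbb{E}[|Y|\mid\mathbf{x}_q]<\infty$, and there is $\epsilon\ge 0$ with $\mathbb{E}\big[\,|Y-\mathbb{E}[Y\mid\mathbf{x}_q]|\,\big|\,\mathbf{x}_q\big]\le\epsilon$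 for all $\mathbf{x}_q\in\mathcal{X}$; moreover there is $\lambda_p\in\mathbb{R}^+$ with $|\mathbb{E}[Y\mid\hat{\mathbf{x}}]-\mathbb{E}[Y\mid\tilde{\mathbf{x}}]|\le\lambda_p\|\hat{\mathbf{x}}-\tilde{\mathbf{x}}\|_2$ for all $\hat{\mathbf{x}},\tilde{\mathbf{x}}\in\mathcal{X}$. (A2) There is $\epsilon_{\mathcal{L}}\ge 0$ with $\mathbb{E}[l(\mathbf{x}_j,Y,m_{\mathcal{L}})\mid\mathbf{x}_j]\le\epsilon_{\mathcal{L}}$ for every $(\mathbf{x}_j,y_j)\in\mathcal{L}$; for every $y\in\mathcal{Y}$ the map $l(\cdot,y,m_{\mathcal{L}})$ is $\lambda_{l_{\mathcal{X}}}$-Lipschitz; and for every $\mathbf{x}\in\mathcal{X}$ the map $l(\mathbf{x},\cdot,m_{\mathcal{L}})$ is $\lambda_{l_{\mathcal{Y}}}$-Lipschitz and convex, with $\mathbb{E}[|l(\mathbf{x},Y,m_{\mathcal{L}})|\mid\mathbf{x}]<\infty$. Then, with $C:=\lambda_{l_{\mathcal{X}}}+\lambda_{l_{\mathcal{Y}}}\lambda_p$, $$\mathbb{E}_{p_{\mathcal{D}}}[l(\mathbf{X},Y,m_{\mathcal{L}})]\le C\,W_{\mathcal{L}_{\mathcal{X}},\mathcal{X}}(p_{\mathcal{X}_{\mathcal{L}}}\,\|\,p_{\mathcal{X}_{\mathcal{D}}})+\lambda_{l_{\mathcal{Y}}}\epsilon+\epsilon_{\mathcal{L}}+\mathbb{E}_{p_{\mathcal{L}}}[l(\mathbf{X},Y,m_{\mathcal{L}})],$$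 where $W_{\mathcal{L}_{\mathcal{X}},\mathcal{X}}$ is the weighted fill distance defined in the context.
   Context: The weighted fill distance of $\mathcal{L}_{\mathcal{X}}=\{\mathbf{x}_j\}_{j=1}^b\subset\mathcal{X}$ in $\mathcal{X}$ with respect to $p_{\mathcal{X}_{\mathcal{D}}}$ is $$W_{\mathcal{L}_{\mathcal{X}},\mathcal{X}}(p_{\mathcal{X}_{\mathcal{L}}}\,\|\,p_{\mathcal{X}_{\mathcal{D}}}):=\sup_{\mathbf{x}\in\mathcal{X}}\min_{\mathbf{x}_j\in\mathcal{L}_{\mathcal{X}}}\|\mathbf{x}-\mathbf{x}_j\|_2\,\psi_{\mathcal{L}_{\mathcal{X}}}(\mathbf{x}),$$ with weight function $\psi_{\mathcal{L}_{\mathcal{X}}}(\mathbf{x})=1-p_{\mathcal{X}_{\mathcal{L}}}(\mathbf{x})/p_{\mathcal{X}_{\mathcal{D}}}(\mathbf{x})$ if $p_{\mathcal{X}_{\mathcal{D}}}(\mathbf{x})\neq 0$ and $\psi_{\mathcal{L}_{\mathcal{X}}}(\mathbf{x})=0$ otherwise. $\mathbb{E}_{p}[l(\mathbf{X},Y,m_{\mathcal{L}})]$ denotes the expectation of $l(\mathbf{X},Y,m_{\mathcal{L}})$ with $(\mathbf{X},Y)\sim p$, for fixed trained model $m_{\mathcal{L}}$. *)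

From HB Require Import structures.
From mathcomp Require Import all_boot all_order all_algebra.
From mathcomp Require Import all_classical all_reals all_analysis.
Set Implicit Arguments. Unset Strict Implicit. Unset Printing Implicit Defensive.
Import Order.TTheory GRing.Theory Num.Theory.
Import numFieldNormedType.Exports.
Local Open Scope classical_set_scope.
Local Open Scope ring_scope.

Definition Rd (R : realType) (d : nat) := g_sigma_algebraType (@open 'rV[R]_d).

Definition norm2 (R : realType) (d : nat) (v : 'rV[R]_d) : R :=
  Num.sqrt (\sum_(i < d) (v ord0 i) ^+ 2).
Definition dist2 (R : realType) (d : nat) (x y : 'rV[R]_d) : R := norm2 (x - y).

Definition bounded_set2 (R : realType) (d : nat) (X : set (Rd R d)) : Prop :=
  exists M : R, forall x, X x -> norm2 (x : 'rV[R]_d) <= M.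

Definition box (R : realType) (d : nat) (a b : 'rV[R]_d) : set (Rd R d) :=
  [set x | forall i : 'I_d, a ord0 i <= (x : 'rV[R]_d) ord0 i <= b ord0 i].

(* mu is the d-dimensional Lebesgue measure (on the Borel sets): it gives every
   closed box its volume; this characterizes Lebesgue measure uniquely. *)
Definition is_lebesgue_Rd (R : realType) (d : nat)
    (mu : {measure set (Rd R d) -> \bar R}) : Prop :=
  forall a b : 'rV[R]_d, (forall i, a ord0 i <= b ord0 i) ->
    mu (box a b) = (\prod_(i < d) (b ord0 i - a ord0 i))%:E.

Definition marginal (R : realType) (d : nat) (Y : set R) (p : Rd R d -> R -> R)
    (x : Rd R d) : R :=
  fine (\int[@lebesgue_measure R]_(y in Y) (p x y)%:E)%E.

Definition condExp (R : realType) (d : nat) (Y : set R) (cond : Rd R d -> R -> R)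
    (g : R -> R) (x : Rd R d) : \bar R :=
  (\int[@lebesgue_measure R]_(y in Y) (g y * cond x y)%:E)%E.

Definition condMean (R : realType) (d : nat) (Y : set R) (cond : Rd R d -> R -> R)
    (x : Rd R d) : R := fine (condExp Y cond id x).

Definition jointExp (R : realType) (d : nat) (mu : {measure set (Rd R d) -> \bar R})
    (X : set (Rd R d)) (Y : set R) (p : Rd R d -> R -> R) (f : Rd R d -> R -> R) : \bar R :=
  (\int[mu]_(x in X) \int[@lebesgue_measure R]_(y in Y) (f x y * p x y)%:E)%E.

Definition psiw (R : realType) (d : nat) (pXL pXD : Rd R d -> R) (x : Rd R d) : R :=
  if pXD x != 0 then 1 - pXL x / pXD x else 0.

(* min_j ||x - x_j||_2 (in \bar R; +oo for an empty set of locations) *)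
Definition mindist (R : realType) (d b : nat) (xs : 'I_b -> Rd R d) (x : Rd R d) : \bar R :=
  \big[Order.min/+oo%E]_(j < b) (dist2 (x : 'rV[R]_d) (xs j : 'rV[R]_d))%:E.

Definition wfill (R : realType) (d b : nat) (X : set (Rd R d)) (xs : 'I_b -> Rd R d)
    (pXL pXD : Rd R d -> R) : \bar R :=
  ereal_sup [set (mindist xs x * (psiw pXL pXD x)%:E)%E | x in X].

From HB Require Import structures.
From mathcomp Require Import all_boot all_order all_algebra.
From mathcomp Require Import all_classical all_reals all_analysis.
From mathcomp Require Import measurable_realfun.
From mathcomp Require Import ring lra.
Import Order.TTheory GRing.Theory Num.Theory.
Import numFieldNormedType.Exports.
Local Open Scope classical_set_scope.
Local Open Scope ring_scope.
Set Implicit Arguments. Unset Strict Implicit.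

(* Let g x be the conditional risk E[l(x, Y, m_L) | x]. Both joint densities
   factor through the common conditional density, so the two expected errors
   are the integrals of p_XD g and p_XL g over X. If x_j is the labelled
   location nearest to x, at distance r, the Lipschitz assumptions give
   l(x, y) <= l(x_j, E[Y | x_j]) + C r + lam_lY |y - E[Y | x]|, and Jensen's
   inequality for the convex Lipschitz map l(x_j, .) gives
   l(x_j, E[Y | x_j]) <= g x_j <= eps_L; hence g x <= eps_L + lam_lY eps + C r.
   Where p_XD exceeds p_XL, the excess (p_XD - p_XL) C r equals
   p_XD C r psi(x) <= p_XD C W, with W the weighted fill distance. So
   p_XD g <= p_XL g + p_XD (eps_L + lam_lY eps + C W) pointwise, and
   integrating against the probability density p_XD yields the bound. *)

Definition conv_closed (R : realType) (Y : set R) :=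
  forall y1 y2 t, Y y1 -> Y y2 -> 0 <= t <= 1 -> Y (t * y1 + (1 - t) * y2).

Definition convex_in (R : realType) (Y : set R) (f : R -> R) :=
  forall y1 y2 t, Y y1 -> Y y2 -> 0 <= t <= 1 ->
    f (t * y1 + (1 - t) * y2) <= t * f y1 + (1 - t) * f y2.

Definition lipschitz_in (R : realType) (Y : set R) (k : R) (f : R -> R) :=
  forall a b, Y a -> Y b -> `|f a - f b| <= k * `|a - b|.

Lemma measurable_fun_lipschitz_in (R : realType) (Y : set R) (k : R) (f : R -> R) :
  measurable Y -> 0 <= k -> lipschitz_in Y k f -> measurable_fun Y f.
Proof.
move=> mY k0 lip; apply: subspace_continuous_measurable_fun => //.
apply/subspace_continuousP => x Yx; apply/cvgrPdist_lt => e e0.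
rewrite near_withinE; have k1 : 0 < k + 1 by rewrite ltr_pwDr.
near=> t => Yt; apply: le_lt_trans (lip _ _ Yx Yt) _.
have : `|x - t| < e / (k + 1).
  by near: t; apply: cvgr_dist_lt; [exact: cvg_id | rewrite divr_gt0].
move=> /ltW /(ler_wpM2l k0) /le_lt_trans; apply.
by rewrite mulrA ltr_pdivrMr//; nra.
Unshelve. all: by end_near. Qed.

Lemma convex_in_slope_le (R : realType) (Y : set R) (f : R -> R) (u m v : R) :
  convex_in Y f -> Y u -> Y v -> u < m -> m < v ->
  (f m - f u) / (m - u) <= (f v - f m) / (v - m).
Proof.
move=> fconv Yu Yv um mv.
have vu : 0 < v - u by rewrite subr_gt0 (lt_trans um mv).
pose t := (v - m) / (v - u).
have t01 : 0 <= t <= 1.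
  by rewrite /t ler_pdivrMr// mul1r divr_ge0 ?subr_ge0 ?ltW//=; lra.
have mE : m = t * u + (1 - t) * v by rewrite /t; field; rewrite gt_eqF.
have fm : f m * (v - u) <= (v - m) * f u + (m - u) * f v.
  have -> : (v - m) * f u + (m - u) * f v = (t * f u + (1 - t) * f v) * (v - u).
    by rewrite /t; field; rewrite gt_eqF.
  by apply: ler_wpM2r; [exact: ltW | rewrite {1}mE; exact: fconv].
by rewrite ler_pdivrMr ?subr_gt0// mulrAC ler_pdivlMr ?subr_gt0//; nra.
Qed.

(* The supremum of the left difference quotients at m is a subgradient: it is
   at most k, and below every right difference quotient by convexity. *)
Lemma convex_lipschitz_subgradient (R : realType) (Y : set R) (f : R -> R) (k m : R) :
  Y m -> 0 <= k -> lipschitz_in Y k f -> convex_in Y f ->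
  exists s, forall y, Y y -> f m + s * (y - m) <= f y.
Proof.
move=> Ym k0 lip fconv.
have [[u0 [Yu0 u0m]]|nleft] := pselect (exists u, Y u /\ u < m); last first.
  exists (- k) => y Yy.
  have my : m <= y by rewrite leNgt; apply/negP => ym; apply: nleft; exists y.
  have := lip _ _ Yy Ym; rewrite (ger0_norm (x := y - m)) ?subr_ge0// => lipym.
  have := ler_norm (f m - f y); rewrite distrC; lra.
pose S := [set (f m - f u) / (m - u) | u in [set u | Y u /\ u < m]].
have S0 : S !=set0 by exists ((f m - f u0) / (m - u0)), u0.
have Sk : ubound S k.
  move=> _ [u [Yu um] <-]; rewrite ler_pdivrMr ?subr_gt0//.
  apply: le_trans (ler_norm _) _.
  by have := lip _ _ Ym Yu; rewrite (gtr0_norm (x := m - u)) ?subr_gt0.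
exists (sup S) => y Yy; have [ym|my|->] := ltgtP y m.
- have : (f m - f y) / (m - y) <= sup S by apply: ub_le_sup; [exists k | exists y].
  by rewrite ler_pdivrMr ?subr_gt0//; nra.
- have : sup S <= (f y - f m) / (y - m).
    by apply: ge_sup => // _ [u [Yu um] <-]; exact: convex_in_slope_le fconv Yu Yy um my.
  by rewrite ler_pdivlMr ?subr_gt0//; nra.
- by rewrite subrr mulr0 addr0.
Qed.

Lemma reweight_le (R : realFieldType) (pD pL g K e w : R) :
  0 <= pD -> 0 <= pL -> 0 <= g -> 0 <= K -> 0 <= w -> g <= K + e ->
  (pD != 0 -> e * (1 - pL / pD) <= w) ->
  pD * g <= pL * g + pD * (K + w).
Proof.
move=> pD0 pL0 g0 K0 w0 gKe ew.
have [pDL|pLD] := leP pD pL.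
  have : pD * g <= pL * g by exact: ler_wpM2r.
  have : 0 <= pD * (K + w) by rewrite mulr_ge0// addr_ge0.
  lra.
have pDpos : 0 < pD by exact: le_lt_trans pL0 pLD.
have := ew (lt0r_neq0 pDpos).
have -> : e * (1 - pL / pD) = e * (pD - pL) / pD by field; rewrite gt_eqF.
rewrite ler_pdivrMr// => {}ew.
have : (pD - pL) * g <= (pD - pL) * (K + e) by rewrite ler_wpM2l// subr_ge0 ltW.
have : (pD - pL) * K <= pD * K by rewrite ler_wpM2r//; lra.
nra.
Qed.

Lemma dist2xx (R : realType) (d : nat) (x : 'rV[R]_d) : dist2 x x = 0.
Proof. by rewrite /dist2 /norm2 subrr big1 ?sqrtr0// => i _; rewrite mxE expr0n. Qed.

Section fill_distance.
Context (R : realType) (d b : nat) (xs : 'I_b -> Rd R d).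
Local Open Scope ereal_scope.

Lemma mindist_attained (x : Rd R d) : (0 < b)%N ->
  exists j, mindist xs x = (dist2 (x : 'rV[R]_d) (xs j))%:E.
Proof.
move=> b0; have [j _ jE] := eq_bigmin (Ordinal b0) xpredT
  (fun j => (dist2 (x : 'rV[R]_d) (xs j))%:E) isT (fun i _ => leey _).
by exists j.
Qed.

Lemma mindist_self (j : 'I_b) : mindist xs (xs j) = 0.
Proof.
apply/le_anti/andP; split; first by apply: (bigmin_inf j) => //; rewrite dist2xx.
by apply/bigmin_geP; split => // i _; rewrite lee_fin sqrtr_ge0.
Qed.

Lemma mindist_psiw_le_wfill (X : set (Rd R d)) (pXL pXD : Rd R d -> R) x r :
  X x -> mindist xs x = r%:E -> (r * psiw pXL pXD x)%:E <= wfill X xs pXL pXD.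
Proof. by move=> Xx xr; apply: ereal_sup_ubound; exists x => //; rewrite xr EFinM. Qed.

Lemma wfill_ge0 (X : set (Rd R d)) (pXL pXD : Rd R d -> R) (j : 'I_b) :
  X (xs j) -> 0 <= wfill X xs pXL pXD.
Proof.
by move=> Xj; have := mindist_psiw_le_wfill pXL pXD Xj (mindist_self j); rewrite mul0r.
Qed.

Lemma mindist_psiw_le (X : set (Rd R d)) (pXL pXD : Rd R d -> R) (C w r : R) x :
  (0 <= C)%R -> C%:E * wfill X xs pXL pXD = w%:E -> X x -> mindist xs x = r%:E ->
  pXD x != 0%R -> (C * (r * (1 - pXL x / pXD x)) <= w)%R.
Proof.
move=> C0 CW Xx xr pXD0; rewrite -lee_fin -CW EFinM lee_wpmul2l ?lee_fin//.
by have := mindist_psiw_le_wfill pXL pXD Xx xr; rewrite /psiw pXD0.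
Qed.

End fill_distance.

Section nonmeasurable_integral.
Context d (T : measurableType d) (R : realType) (mu : {measure set T -> \bar R}).
Local Open Scope ereal_scope.
Import HBNNSimple.

(* Both integrals are suprema over simple minorants, so monotonicity needs no
   measurability. *)
Lemma ge0_le_integral_nonmeas (D : set T) (f g : T -> \bar R) :
  (forall x, D x -> 0 <= f x) -> (forall x, D x -> f x <= g x) ->
  \int[mu]_(x in D) f x <= \int[mu]_(x in D) g x.
Proof.
move=> f0 fg; have g0 x : D x -> 0 <= g x by move=> Dx; exact: le_trans (f0 _ Dx) (fg _ Dx).
rewrite (ge0_integralE mu f0) (ge0_integralE mu g0).
apply: ereal_sup_le => _ [h hf <-]; exists h => //= x.
by apply: le_trans (hf x) _; rewrite /patch; case: ifP => // /[1!inE]; exact: fg.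
Qed.

(* A simple minorant h of f + g splits as (h - g)^+ + g, the first part being
   a measurable minorant of f. *)
Lemma ge0_integralD_le_nonmeas (D : set T) (f : T -> \bar R) (g : T -> R) :
  measurable D -> (forall x, D x -> 0 <= f x) -> (forall x, D x -> (0 <= g x)%R) ->
  measurable_fun D g ->
  \int[mu]_(x in D) (f x + (g x)%:E) <=
    \int[mu]_(x in D) f x + \int[mu]_(x in D) (g x)%:E.
Proof.
move=> mD f0 g0 mg.
have fg0 x : D x -> 0 <= f x + (g x)%:E by move=> Dx; rewrite adde_ge0 ?lee_fin ?f0 ?g0.
have gD0 x : (0 <= (g \_ D) x)%R by rewrite /patch; case: ifP => // /[1!inE] /g0.
have mgD : measurable_fun setT (g \_ D) by exact/(measurable_restrictT _ _).1.
rewrite (ge0_integralE mu fg0); apply: ge_ereal_sup => _ [h hfg <-].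
pose u x := Num.max (h x - (g \_ D) x)%R 0%R.
have mu_ : measurable_fun setT u by apply: measurable_maxr => //; exact: measurable_funB.
have u0 x : (0 <= u x)%R by rewrite le_max lexx orbT.
have uf x : (u x)%:E <= (f \_ D) x.
  have := hfg x; rewrite /u EFin_max ge_max.
  have [Dx|nDx] := boolP (x \in D); last first.
    rewrite !patchC ?in_setC//.
    change ((h x)%:E <= (0 : R)%:E -> ((h x - 0)%:E <= (0 : R)%:E) && ((0 : R)%:E <= (0 : R)%:E)).
    by move=> hx; rewrite subr0 hx lexx.
  by rewrite !patchT// EFinB leeBlDr// => ->; exact: f0 (set_mem Dx).
have -> : sintegral mu h = \int[mu]_x (h x)%:E by rewrite integral_nnsfun// patch_setT.
rewrite (integral_mkcond D f) (integral_mkcond D (EFin \o g)).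
apply: le_trans (_ : \int[mu]_x ((u x)%:E + ((g \_ D) x)%:E) <= _).
  apply: ge0_le_integral => //.
  - by move=> x _; rewrite lee_fin.
  - exact/measurable_EFinP.
  - by apply: emeasurable_funD; exact/measurable_EFinP.
  - by move=> x _; rewrite -EFinD lee_fin -lerBlDr le_max lexx.
rewrite ge0_integralD//; last 4 first.
- by move=> x _; rewrite lee_fin.
- exact/measurable_EFinP.
- by move=> x _; rewrite lee_fin.
- exact/measurable_EFinP.
by apply: leeD; apply: ge0_le_integral_nonmeas => x _;
  rewrite ?lee_fin// /patch; case: ifP.
Qed.

Lemma integral_le_shift (D : set T) (F G : T -> \bar R) (p : T -> R) (k : R) :
  measurable D -> measurable_fun D p -> (forall x, D x -> (0 <= p x)%R) ->
  \int[mu]_(x in D) (p x)%:E = 1 -> (0 <= k)%R ->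
  (forall x, D x -> 0 <= F x) -> (forall x, D x -> 0 <= G x) ->
  (forall x, D x -> F x <= G x + (p x * k)%:E) ->
  \int[mu]_(x in D) F x <= \int[mu]_(x in D) G x + k%:E.
Proof.
move=> mD mp p0 p1 k0 F0 G0 FG.
apply: le_trans (ge0_le_integral_nonmeas F0 FG) _.
apply: le_trans (ge0_integralD_le_nonmeas mD G0 _ _) _.
- by move=> x Dx; rewrite mulr_ge0 ?p0.
- exact: measurable_funM.
rewrite leeD2l// le_eqVlt; apply/orP; left; apply/eqP.
under eq_integral do rewrite EFinM muleC.
rewrite ge0_integralZl_EFin// ?p1 ?mule1//.
- exact/measurable_EFinP.
Qed.

End nonmeasurable_integral.

Section density.
Context (R : realType) (Y : set R) (c : R -> R).
Local Notation leb := (@lebesgue_measure R).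
Local Notation mean := (fine (\int[leb]_(y in Y) (y * c y)%:E)).
Local Open Scope ereal_scope.
Hypotheses (mY : measurable Y) (mc : measurable_fun Y c)
  (c0 : forall y, Y y -> (0 <= c y)%R) (c1 : \int[leb]_(y in Y) (c y)%:E = 1).
Let mYl : measurable (Y : set (measurableTypeR R)) := mY.

Lemma density_integrable : leb.-integrable Y (EFin \o c).
Proof.
apply/integrableP; split; first exact/measurable_EFinP.
under eq_integral => y /[1!inE] Yy do rewrite /= ger0_norm ?c0//.
by rewrite c1 ltry.
Qed.

Lemma integral_densityZ (a : R) : \int[leb]_(y in Y) (a * c y)%:E = a%:E.
Proof.
under eq_integral do rewrite EFinM.
by rewrite integralZl ?density_integrable// c1 mule1.
Qed.

Lemma density_integral_le_dev (f : R -> R) (z a k eps : R) :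
  Y z -> (0 <= k)%R -> (forall y, Y y -> (0 <= f y)%R) ->
  (forall y, Y y -> (f y <= a + k * `|y - z|)%R) ->
  \int[leb]_(y in Y) (`|y - z| * c y)%:E <= eps%:E ->
  \int[leb]_(y in Y) (f y * c y)%:E <= (a + k * eps)%:E.
Proof.
move=> Yz k0 f0 fa dev.
have a0 : (0 <= a)%R by have := fa _ Yz; rewrite subrr normr0 mulr0 addr0; exact/le_trans/f0.
have mdev : measurable_fun Y (fun y => `|y - z| * c y)%R.
  by apply: measurable_funM => //; apply: measurableT_comp => //; exact: measurable_funB.
apply: le_trans (_ : \int[leb]_(y in Y) ((a * c y)%:E + k%:E * (`|y - z| * c y)%:E) <= _).
  apply: ge0_le_integral_nonmeas => [y Yy|y Yy]; first by rewrite lee_fin mulr_ge0 ?f0 ?c0.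
  by rewrite -EFinM -EFinD lee_fin mulrA -mulrDl ler_wpM2r ?c0 ?fa.
rewrite ge0_integralD//; last 4 first.
- by move=> y Yy; rewrite lee_fin mulr_ge0 ?c0.
- by apply/measurable_EFinP; exact: measurable_funM.
- by move=> y Yy; rewrite mule_ge0// lee_fin mulr_ge0 ?c0.
- by apply: emeasurable_funM => //; exact/measurable_EFinP.
rewrite integral_densityZ ge0_integralZl_EFin//; last 2 first.
- by move=> y Yy; rewrite lee_fin mulr_ge0 ?c0.
- exact/measurable_EFinP.
by rewrite EFinD leeD2l// EFinM lee_wpmul2l// lee_fin.
Qed.

Section density_mean.
Hypothesis ymc : leb.-integrable Y (fun y => (y * c y)%:E).

Lemma integrable_density_affine (a s : R) :
  leb.-integrable Y (fun y => ((a + s * y) * c y)%:E).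
Proof.
apply: (eq_integrable mYl (fun y => a%:E * (c y)%:E + s%:E * (y * c y)%:E)).
  by move=> y _; rewrite -!EFinM -EFinD; congr EFin; ring.
by apply: (integrableD mYl); apply: integrableZl => //; exact: density_integrable.
Qed.

Lemma integral_density_affine (a s : R) :
  \int[leb]_(y in Y) ((a + s * y) * c y)%:E = (a + s * mean)%:E.
Proof.
transitivity (\int[leb]_(y in Y) (a%:E * (c y)%:E + s%:E * (y * c y)%:E)).
  by apply: eq_integral => y _; rewrite -!EFinM -EFinD; congr EFin; ring.
rewrite integralD//; last 2 first.
- by apply: integrableZl => //; exact: density_integrable.
- exact: integrableZl.
rewrite !integralZl//; last exact: density_integrable.
have -> : \int[leb]_(y in Y) (y * c y)%:E = mean%:E.
  by rewrite fineK//; exact: integrable_fin_num.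
by rewrite c1 mule1 -EFinM -EFinD.
Qed.

(* The density cannot sit strictly on one side of its mean: the centred
   integrand would vanish almost everywhere, forcing c = 0 a.e. *)
Lemma density_not_one_sided (s : R) : ~ (forall y, Y y -> (0 < s * (y - mean))%R).
Proof.
move=> side.
have abs0 : \int[leb]_(y in Y) (`|(s * (y - mean) * c y)%:E|) = 0.
  rewrite -[RHS](_ : (- s * mean + s * mean)%:E = 0); last by rewrite mulNr addNr.
  rewrite -(integral_density_affine (- s * mean)); apply: eq_integral => y /[1!inE] Yy.
  rewrite gee0_abs; last by rewrite lee_fin mulr_ge0 ?c0// ltW ?side.
  by congr EFin; ring.
have mf : measurable_fun Y (fun y => (s * (y - mean) * c y)%:E).
  apply/measurable_EFinP; apply: measurable_funM => //.
  by apply: measurable_funM => //; exact: measurable_funB.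
have ae0 := (ae_eq_integral_abs leb mYl mf).1 abs0.
have : ae_eq leb Y (EFin \o c) (cst 0).
  apply: filterS ae0 => y yc Yy.
  move: (yc Yy) => /= /eqP; rewrite eqe !mulf_eq0 => /orP[/orP[]|/eqP ->//].
  + by move=> /eqP s0; have := side _ Yy; rewrite s0 mul0r ltxx.
  + by move=> /eqP ym; have := side _ Yy; rewrite ym mulr0 ltxx.
have mEc : measurable_fun (Y : set (measurableTypeR R)) (EFin \o c).
  exact/measurable_EFinP.
move=> /(ae_eq_integral _ _ mYl mEc (measurable_cst _)).
by rewrite c1 integral0 => /eqP; rewrite onee_eq0.
Qed.

Lemma density_mean_mem : conv_closed Y -> Y mean.
Proof.
move=> Yconv; apply: contrapT => Ym.
have ne y : Y y -> y != mean by move=> Yy; apply/eqP => ym; apply: Ym; rewrite -ym.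
have [[y1 [Y1 y1m]]|nleft] := pselect (exists y, Y y /\ (y < mean)%R); last first.
  apply: (density_not_one_sided (s := 1%R)) => y Yy; rewrite mul1r subr_gt0 lt_neqAle eq_sym ne//=.
  by rewrite leNgt; apply/negP => ym; apply: nleft; exists y.
have [[y2 [Y2 my2]]|nright] := pselect (exists y, Y y /\ (mean < y)%R); last first.
  apply: (density_not_one_sided (s := -1%R)) => y Yy; rewrite mulN1r opprB subr_gt0.
  by rewrite lt_neqAle ne//= leNgt; apply/negP => my; apply: nright; exists y.
apply: Ym; have y12 : (0 < y2 - y1)%R by rewrite subr_gt0 (lt_trans y1m my2).
have -> : mean = ((y2 - mean) / (y2 - y1) * y1 + (1 - (y2 - mean) / (y2 - y1)) * y2)%R.
  by field; rewrite gt_eqF.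
apply: Yconv => //; rewrite ler_pdivrMr// mul1r divr_ge0 ?subr_ge0 ?ltW//=; lra.
Qed.

Lemma density_jensen (f : R -> R) (k : R) :
  conv_closed Y -> (0 <= k)%R -> lipschitz_in Y k f -> convex_in Y f ->
  leb.-integrable Y (fun y => (f y * c y)%:E) ->
  (f mean)%:E <= \int[leb]_(y in Y) (f y * c y)%:E.
Proof.
move=> Yconv k0 lip fconv ifc.
have [s sub] := convex_lipschitz_subgradient (density_mean_mem Yconv) k0 lip fconv.
have -> : f mean = (f mean - s * mean + s * mean)%R by rewrite subrK.
rewrite -integral_density_affine; apply: le_integral => //.
  exact: integrable_density_affine.
move=> y /[1!inE] Yy; rewrite lee_fin ler_wpM2r ?c0//.
by have := sub _ Yy; lra.
Qed.

End density_mean.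
End density.

Lemma measurable_fun_section d1 d2 d3 (T1 : measurableType d1) (T2 : measurableType d2)
    (T3 : measurableType d3) (A : set T1) (B : set T2) (F : T1 * T2 -> T3) x :
  measurable A -> measurable B -> measurable_fun (A `*` B) F -> A x ->
  measurable_fun B (fun y => F (x, y)).
Proof.
move=> mA mB mF Ax; apply: (measurable_comp (measurableX mA mB)) mF _.
- by move=> _ [y By <-].
- exact: measurable_funS (pair1_measurable x).
Qed.

Lemma measurable_fun_integral_section d (T : measurableType d) (R : realType)
    (A : set T) (B : set R) (F : T -> R -> R) :
  measurable A -> measurable B ->
  measurable_fun (A `*` B) (fun z : T * R => F z.1 z.2) ->
  (forall x y, A x -> B y -> 0 <= F x y) ->
  measurable_fun A (fun x => (\int[@lebesgue_measure R]_(y in B) (F x y)%:E)%E).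
Proof.
move=> mA mB mF F0.
pose G := (fun z : T * measurableTypeR R => (F z.1 z.2)%:E) \_ (A `*` B).
have mG : measurable_fun setT G.
  by apply/(measurable_restrictT _ _).1; [exact: measurableX | exact/measurable_EFinP].
have G0 z : (0 <= G z)%E.
  by rewrite /G /patch; case: ifP => // /[1!inE] -[/= Az Bz]; rewrite lee_fin F0.
apply: eq_measurable_fun (measurable_funS measurableT (@subsetT _ A)
  (@measurable_fun_fubini_tonelli_F _ _ _ _ R lebesgue_measure G mG G0)) => x /[1!inE] Ax.
rewrite /fubini_F [RHS]integral_mkcond; apply: eq_integral => y _.
rewrite /G /patch; case: ifP => [/[1!inE] -[_ By]|]; case: ifP => //.
- by rewrite mem_set.
- by move=> /set_mem By; rewrite mem_set.
Qed.

Section marginal.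
Context (R : realType) (d : nat) (Y : set R) (q cond : Rd R d -> R -> R).
Local Notation leb := (@lebesgue_measure R).
Local Open Scope ereal_scope.

Lemma marginal_ge0 x : (forall y, Y y -> (0 <= q x y)%R) -> (0 <= marginal Y q x)%R.
Proof. by move=> q0; apply: fine_ge0; apply: integral_ge0 => y Yy; rewrite lee_fin q0. Qed.

(* An infinite integral would give the junk marginal fine +oo = 0, hence q = 0. *)
Lemma integral_marginal x : (forall y, Y y -> (0 <= q x y)%R) ->
  (forall y, Y y -> q x y = (marginal Y q x * cond x y)%R) ->
  \int[leb]_(y in Y) (q x y)%:E = (marginal Y q x)%:E.
Proof.
move=> q0 qcond; set I := \int[leb]_(y in Y) (q x y)%:E.
have I0 : 0 <= I by apply: integral_ge0 => y Yy; rewrite lee_fin q0.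
suff Ioo : I != +oo by rewrite /marginal -/I fineK// ge0_fin_numE// ltey.
apply/eqP => Ioo.
have : I = 0 by apply: integral0_eq => y Yy /=; rewrite qcond// /marginal -/I Ioo mul0r.
by rewrite Ioo.
Qed.

Lemma integral_marginal_condExp (f : R -> R) (r : R) x :
  measurable Y -> measurable_fun Y (fun y => f y * cond x y)%R ->
  (forall y, Y y -> (0 <= f y * cond x y)%R) -> (forall y, Y y -> (0 <= q x y)%R) ->
  (forall y, Y y -> q x y = (marginal Y q x * cond x y)%R) ->
  condExp Y cond f x = r%:E ->
  \int[leb]_(y in Y) (f y * q x y)%:E = (marginal Y q x * r)%:E.
Proof.
move=> mY mfc fc0 q0 qcond fr.
have mYl : measurable (Y : set (measurableTypeR R)) := mY.
transitivity (\int[leb]_(y in Y) ((marginal Y q x)%:E * (f y * cond x y)%:E)).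
  by apply: eq_integral => y /[1!inE] Yy; rewrite qcond// -EFinM; congr EFin; ring.
have fc0E y : Y y -> 0 <= (f y * cond x y)%:E by move=> Yy; rewrite lee_fin fc0.
have mfcE : measurable_fun (Y : set (measurableTypeR R)) (fun y => (f y * cond x y)%:E).
  exact/measurable_EFinP.
rewrite (ge0_integralZl_EFin _ mYl fc0E mfcE (marginal_ge0 q0)).
by rewrite -[X in _ * X]/(condExp Y cond f x) fr -EFinM.
Qed.

Lemma measurable_marginal (X : set (Rd R d)) :
  measurable X -> measurable Y -> measurable_fun (X `*` Y) (fun z : Rd R d * R => q z.1 z.2) ->
  (forall x y, X x -> Y y -> (0 <= q x y)%R) ->
  (forall x y, X x -> Y y -> q x y = (marginal Y q x * cond x y)%R) ->
  measurable_fun X (marginal Y q).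
Proof.
move=> mX mY mq q0 qcond; apply/measurable_EFinP.
apply: eq_measurable_fun (measurable_fun_integral_section mX mY mq q0) => x /[1!inE] Xx.
by rewrite integral_marginal // => y; [exact: q0 | exact: qcond].
Qed.

End marginal.

Section conditional_risk.
Context (R : realType) (d : nat) (X : set (Rd R d)) (Y : set R) (cond : Rd R d -> R -> R).
Local Notation leb := (@lebesgue_measure R).
Local Notation mean := (condMean Y cond).
Local Open Scope ereal_scope.
Hypotheses (mX : measurable X) (mY : measurable Y) (Yconv : conv_closed Y)
  (mcond : measurable_fun (X `*` Y) (fun z : Rd R d * R => cond z.1 z.2))
  (cond0 : forall x y, X x -> Y y -> (0 <= cond x y)%R)
  (cond1 : forall x, X x -> \int[leb]_(y in Y) (cond x y)%:E = 1)
  (condY : forall x, X x -> condExp Y cond (fun y => `|y|%R) x < +oo).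

Lemma measurable_cond x : X x -> measurable_fun Y (cond x).
Proof. by move=> Xx; apply: (measurable_fun_section mX mY mcond). Qed.

Lemma integrable_cond (g : R -> R) x : X x -> measurable_fun Y g ->
  condExp Y cond (fun y => `|g y|%R) x < +oo ->
  leb.-integrable Y (fun y => (g y * cond x y)%:E).
Proof.
move=> Xx mg gfin; apply/integrableP; split.
  by apply/measurable_EFinP; apply: measurable_funM => //; exact: measurable_cond.
apply: le_lt_trans gfin; rewrite le_eqVlt; apply/orP; left; apply/eqP.
by apply: eq_integral => y /[1!inE] Yy /=; rewrite normrM (ger0_norm (cond0 Xx Yy)).
Qed.

Let integrable_cond_id x : X x -> leb.-integrable Y (fun y => (y * cond x y)%:E).
Proof. by move=> Xx; apply: (integrable_cond (g := id) Xx); [exact: measurable_id | exact: condY]. Qed.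

Lemma condMean_mem x : X x -> Y (mean x).
Proof.
move=> Xx; have := density_mean_mem mY (measurable_cond Xx) (@cond0 x ^~ Xx) (cond1 Xx)
  (integrable_cond_id Xx) Yconv.
by rewrite /condMean /condExp.
Qed.

Variables (loss : Rd R d -> R -> R) (eps lamp lamX lamY : R).
Hypotheses (loss0 : forall x y, X x -> Y y -> (0 <= loss x y)%R) (lamY0 : (0 <= lamY)%R)
  (loss_lipX : forall y x1 x2, Y y -> X x1 -> X x2 ->
     (`|loss x1 y - loss x2 y| <= lamX * dist2 (x1 : 'rV[R]_d) x2)%R)
  (loss_lipY : forall x, X x -> lipschitz_in Y lamY (loss x))
  (loss_conv : forall x, X x -> convex_in Y (loss x))
  (loss_fin : forall x, X x -> condExp Y cond (fun y => `|loss x y|%R) x < +oo)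
  (mean_dev : forall x, X x -> condExp Y cond (fun y => `|y - mean x|%R) x <= eps%:E)
  (mean_lip : forall x1 x2, X x1 -> X x2 ->
     (`|mean x1 - mean x2| <= lamp * dist2 (x1 : 'rV[R]_d) x2)%R).

Let measurable_loss x : X x -> measurable_fun Y (loss x).
Proof. by move=> Xx; exact: measurable_fun_lipschitz_in mY lamY0 (loss_lipY Xx). Qed.

Let integrable_loss x : X x -> leb.-integrable Y (fun y => (loss x y * cond x y)%:E).
Proof. by move=> Xx; exact: integrable_cond Xx (measurable_loss Xx) (loss_fin Xx). Qed.

Lemma condExp_loss_fin_num x : X x -> condExp Y cond (loss x) x \is a fin_num.
Proof. by move=> Xx; apply: integrable_fin_num => //; exact: integrable_loss. Qed.

Lemma condExp_loss_marginal (q : Rd R d -> R -> R) x : X x ->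
  (forall y, Y y -> (0 <= q x y)%R) ->
  (forall y, Y y -> q x y = (marginal Y q x * cond x y)%R) ->
  \int[leb]_(y in Y) (loss x y * q x y)%:E =
    (marginal Y q x * fine (condExp Y cond (loss x) x))%:E.
Proof.
move=> Xx q0 qcond; apply: (integral_marginal_condExp (cond := cond)) => //.
- apply: measurable_funM; [exact: measurable_loss | exact: measurable_cond].
- by move=> y Yy; rewrite mulr_ge0 ?loss0 ?cond0.
- by rewrite fineK// condExp_loss_fin_num.
Qed.

Lemma loss_mean_le_condExp z : X z -> (loss z (mean z))%:E <= condExp Y cond (loss z) z.
Proof.
move=> Xz; exact: (density_jensen mY (measurable_cond Xz) (@cond0 z ^~ Xz) (cond1 Xz)
  (integrable_cond_id Xz) Yconv lamY0 (loss_lipY Xz) (loss_conv Xz) (integrable_loss Xz)).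
Qed.

(* Jensen at z bounds loss z (mean z) by the risk at z; the Lipschitz
   conditions bound loss x y by loss z (mean z) plus the distance and
   deviation terms. *)
Lemma condExp_loss_le x z : X x -> X z ->
  condExp Y cond (loss x) x <=
    condExp Y cond (loss z) z + ((lamX + lamY * lamp) * dist2 (x : 'rV[R]_d) z + lamY * eps)%:E.
Proof.
move=> Xx Xz; apply: le_trans (leeD2r _ (loss_mean_le_condExp Xz)); rewrite -EFinD addrA.
apply: (density_integral_le_dev mY (measurable_cond Xx) (@cond0 x ^~ Xx) (cond1 Xx)
  (condMean_mem Xx) lamY0).
- by move=> y Yy; exact: loss0.
- move=> y Yy; have := loss_lipX Yy Xx Xz; have := loss_lipY Xz Yy (condMean_mem Xz).
  have := ler_wpM2l lamY0 (mean_lip Xx Xz).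
  have := ler_wpM2l lamY0 (ler_distD (mean x) y (mean z)).
  have := ler_norm (loss x y - loss z y); have := ler_norm (loss z y - loss z (mean z)).
  lra.
- exact: mean_dev.
Qed.

Lemma condExp_loss_le_mindist (b : nat) (xs : 'I_b -> Rd R d) (epsL : R) x :
  (0 < b)%N -> (forall j, X (xs j)) ->
  (forall j, condExp Y cond (loss (xs j)) (xs j) <= epsL%:E) -> X x ->
  exists2 r, mindist xs x = r%:E &
    condExp Y cond (loss x) x <= (epsL + lamY * eps + (lamX + lamY * lamp) * r)%:E.
Proof.
move=> b0 Xxs Lxs Xx; have [j xj] := mindist_attained xs x b0.
exists (dist2 (x : 'rV[R]_d) (xs j)) => //.
apply: le_trans (condExp_loss_le Xx (Xxs j)) _.
by apply: le_trans (leeD2r _ (Lxs j)) _; rewrite -EFinD lee_fin; lra.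
Qed.

Lemma integral_loss_reweight_le (pD pL : Rd R d -> R -> R) (b : nat) (xs : 'I_b -> Rd R d)
    (epsL w : R) x :
  (0 < b)%N -> (forall j, X (xs j)) ->
  (forall j, condExp Y cond (loss (xs j)) (xs j) <= epsL%:E) ->
  (0 <= epsL + lamY * eps)%R -> (0 <= w)%R -> (0 <= lamX + lamY * lamp)%R ->
  (lamX + lamY * lamp)%:E * wfill X xs (marginal Y pL) (marginal Y pD) = w%:E ->
  (forall y, Y y -> (0 <= pD x y)%R) -> (forall y, Y y -> (0 <= pL x y)%R) ->
  (forall y, Y y -> pD x y = (marginal Y pD x * cond x y)%R) ->
  (forall y, Y y -> pL x y = (marginal Y pL x * cond x y)%R) -> X x ->
  \int[leb]_(y in Y) (loss x y * pD x y)%:E <=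
    \int[leb]_(y in Y) (loss x y * pL x y)%:E + (marginal Y pD x * (epsL + lamY * eps + w))%:E.
Proof.
move=> b0 Xxs Lxs K0 w0 C0 CW pD0 pL0 pDc pLc Xx.
have [r xr risk] := condExp_loss_le_mindist b0 Xxs Lxs Xx.
rewrite (condExp_loss_marginal Xx pD0 pDc) (condExp_loss_marginal Xx pL0 pLc) -EFinD lee_fin.
apply: (reweight_le (e := (lamX + lamY * lamp) * r)) => //.
- exact: marginal_ge0.
- exact: marginal_ge0.
- by apply: fine_ge0; apply: integral_ge0 => y Yy; rewrite lee_fin mulr_ge0 ?loss0 ?cond0.
- by rewrite -lee_fin fineK ?condExp_loss_fin_num.
- by rewrite -mulrA; exact: mindist_psiw_le C0 CW Xx xr.
Qed.

End conditional_risk.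


Theorem theorem1 (R : realType) (d : nat)
  (mu : {measure set (Rd R d) -> \bar R}) (hmu : is_lebesgue_Rd mu)
  (X : set (Rd R d)) (Y : set R)
  (hXm : measurable X) (hYm : measurable Y) (hXb : bounded_set2 X)
  (hYconv : forall y1 y2 t, Y y1 -> Y y2 -> 0 <= t <= 1 -> Y (t * y1 + (1 - t) * y2))
  (* joint densities p_D, p_L on X x Y *)
  (pD pL : Rd R d -> R -> R)
  (hpDm : measurable_fun (X `*` Y) (fun z : Rd R d * R => pD z.1 z.2))
  (hpLm : measurable_fun (X `*` Y) (fun z : Rd R d * R => pL z.1 z.2))
  (hpD0 : forall x y, X x -> Y y -> 0 <= pD x y)
  (hpL0 : forall x y, X x -> Y y -> 0 <= pL x y)
  (hpD1 : (\int[mu]_(x in X) \int[@lebesgue_measure R]_(y in Y) (pD x y)%:E = 1)%E)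
  (hpL1 : (\int[mu]_(x in X) \int[@lebesgue_measure R]_(y in Y) (pL x y)%:E = 1)%E)
  (* common conditional density p(y | x) *)
  (cond : Rd R d -> R -> R)
  (hcm : measurable_fun (X `*` Y) (fun z : Rd R d * R => cond z.1 z.2))
  (hc0 : forall x y, X x -> Y y -> 0 <= cond x y)
  (hc1 : forall x, X x -> (\int[@lebesgue_measure R]_(y in Y) (cond x y)%:E = 1)%E)
  (hpDc : forall x y, X x -> Y y -> pD x y = marginal Y pD x * cond x y)
  (hpLc : forall x y, X x -> Y y -> pL x y = marginal Y pL x * cond x y)
  (* labeled set L = {(x_j, y_j)}_{j=1}^b, trained model m_L, error function l *)
  (b : nat) (hb : (0 < b)%N) (xs : 'I_b -> Rd R d) (ys : 'I_b -> R)
  (hxs : forall j, X (xs j)) (hys : forall j, Y (ys j))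
  (M : Type) (mL : M) (l : Rd R d -> R -> M -> R)
  (hl0 : forall x y m, X x -> Y y -> 0 <= l x y m)
  (* (A1) *)
  (eps lamp : R) (heps : 0 <= eps) (hlamp : 0 <= lamp)
  (hA1int : forall x, X x -> (condExp Y cond (fun y => `|y|%R) x < +oo)%E)
  (hA1eps : forall x, X x ->
     (condExp Y cond (fun y => `|y - condMean Y cond x|%R) x <= eps%:E)%E)
  (hA1lip : forall x1 x2, X x1 -> X x2 ->
     `|condMean Y cond x1 - condMean Y cond x2| <= lamp * dist2 (x1 : 'rV[R]_d) x2)
  (* (A2) *)
  (epsL lamlX lamlY : R) (hepsL : 0 <= epsL) (hlamlX : 0 <= lamlX) (hlamlY : 0 <= lamlY)
  (hA2L : forall j, (condExp Y cond (fun y => l (xs j) y mL)%R (xs j) <= epsL%:E)%E)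
  (hA2x : forall y x1 x2, Y y -> X x1 -> X x2 ->
     `|l x1 y mL - l x2 y mL| <= lamlX * dist2 (x1 : 'rV[R]_d) x2)
  (hA2y : forall x y1 y2, X x -> Y y1 -> Y y2 ->
     `|l x y1 mL - l x y2 mL| <= lamlY * `|y1 - y2|)
  (hA2conv : forall x y1 y2 t, X x -> Y y1 -> Y y2 -> 0 <= t <= 1 ->
     l x (t * y1 + (1 - t) * y2) mL <= t * l x y1 mL + (1 - t) * l x y2 mL)
  (hA2int : forall x, X x -> (condExp Y cond (fun y => `|l x y mL|%R) x < +oo)%E) :
  let C := lamlX + lamlY * lamp in
  (jointExp mu X Y pD (fun x y => l x y mL) <=
     C%:E * wfill X xs (marginal Y pL) (marginal Y pD)
     + (lamlY * eps)%:E + epsL%:E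
     + jointExp mu X Y pL (fun x y => l x y mL))%E.
Proof.
cbv zeta; set C := lamlX + lamlY * lamp; set W := wfill X xs (marginal Y pL) (marginal Y pD).
have C0 : 0 <= C by rewrite addr_ge0// mulr_ge0.
have JL0 : (0 <= jointExp mu X Y pL (fun x y => l x y mL))%E.
  by apply: integral_ge0 => x Xx; apply: integral_ge0 => y Yy; rewrite lee_fin mulr_ge0 ?hl0 ?hpL0.
have [CWoo|CWfin] := eqVneq (C%:E * W)%E +oo%E.
  by rewrite CWoo addye ?leey//; apply: contraTneq JL0 => ->.
have CW0 : (0 <= C%:E * W)%E by rewrite mule_ge0 ?lee_fin// (wfill_ge0 _ _ (hxs (Ordinal hb))).
pose cw := fine (C%:E * W).
have CWE : (C%:E * W)%E = cw%:E by rewrite fineK// ge0_fin_numE// ltey.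
have loss0 x y : X x -> Y y -> 0 <= l x y mL by exact: hl0.
have lipY x : X x -> lipschitz_in Y lamlY (fun y => l x y mL) by move=> Xx a a'; exact: hA2y.
have convY x : X x -> convex_in Y (fun y => l x y mL) by move=> Xx y1 y2 t; exact: hA2conv.
apply: le_trans (integral_le_shift (p := marginal Y pD) (k := epsL + lamlY * eps + cw)
  (G := fun x => \int[@lebesgue_measure R]_(y in Y) (l x y mL * pL x y)%:E)%E hXm
  (measurable_marginal hXm hYm hpDm hpD0 hpDc) _ _ _ _ _ _) _.
- by move=> x Xx; exact: marginal_ge0 (hpD0 x ^~ Xx).
- rewrite -hpD1; apply: eq_integral => x /[1!inE] Xx.
  by rewrite (integral_marginal (hpD0 x ^~ Xx) (hpDc x ^~ Xx)).
- by rewrite !addr_ge0 ?mulr_ge0 ?fine_ge0.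
- by move=> x Xx; apply: integral_ge0 => y Yy; rewrite lee_fin mulr_ge0 ?hl0 ?hpD0.
- by move=> x Xx; apply: integral_ge0 => y Yy; rewrite lee_fin mulr_ge0 ?hl0 ?hpL0.
- move=> x Xx; apply: (integral_loss_reweight_le hXm hYm hYconv hcm hc0 hc1 hA1int loss0 hlamlY
    hA2x lipY convY hA2int hA1eps hA1lip hb hxs hA2L _ (fine_ge0 CW0) C0 CWE (hpD0 x ^~ Xx)
    (hpL0 x ^~ Xx) (hpDc x ^~ Xx) (hpLc x ^~ Xx) Xx).
  by rewrite addr_ge0 ?mulr_ge0.
by rewrite CWE -!EFinD addeC; apply: leeD2r; rewrite lee_fin; lra.
Qed.
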